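(* For every non-negative integer $n$, the number of partitions into an even number of distinct parts $\lambda_1>\lambda_2>\dots>\lambda_{2l}$ with $\lambda_1+\lambda_3+\dots+\lambda_{2l-1}=n$ equals the number of partitions of $n$ with non-negative crank. Equivalently, \[\sum_{\pi\in\mathcal{D}_e}q^{\mathcal{O}(\pi)}=\sum_{\pi\in\tilde C_{\ge0}}q^{|\pi|},\] where $\mathcal{D}_e$ is the set of partitions into an even number of distinct parts, $\mathcal{O}(\pi)$ is the sum of the odd-indexed parts of $\pi$, and $\tilde C_{\ge 0}$ is the set of partitions with crank $\ge 0$.
   Context: A partition is a finite weakly decreasing sequence of positive integers $(\lambda_1,\lambda_2,\dots)$; the empty partition has $0$ parts (an even number) and norm $0$. The crank of a partition $\pi$ is defined as: the largest part of $\pi$ if $1$ is not a part of $\pi$ (the empty partition has crank $0$); otherwise, (the number of parts of $\pi$ larger than the number of $1$'s in $\pi$) minus (the number of $1$'s in $\pi$). *)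

From mathcomp Require Import all_boot all_order all_algebra.
Set Implicit Arguments. Unset Strict Implicit. Unset Printing Implicit Defensive.

Definition is_partition (s : seq nat) : bool :=
  all (fun x => ltn 0 x) s && sorted geq s.

Definition is_distinct_partition (s : seq nat) : bool :=
  all (fun x => ltn 0 x) s && sorted gtn s.

Definition in_De (s : seq nat) : bool :=
  is_distinct_partition s && ~~ odd (size s).

(* O(pi): sum of the odd-indexed parts lambda_1 + lambda_3 + ...
   (1-based indices, i.e. 0-based even positions). *)
Definition odd_indexed_sum (s : seq nat) : nat :=
  \sum_(i < size s | ~~ odd i) nth 0 s i.

Definition crank (s : seq nat) : int :=
  let w := count_mem 1 s in
  if w == 0 then Posz (\max_(x <- s) x)%N
  else (Posz (count (fun x => ltn w x) s) - Posz w)%R.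

From mathcomp Require Import all_boot all_order all_algebra.
From mathcomp Require Import zify.
Import Order.TTheory GRing.Theory Num.Theory.
Set Implicit Arguments. Unset Strict Implicit.

(* Code a partition by peeling: record its largest part x and the number w of its
   other parts equal to 1, delete these, lower the remaining parts by 1 and repeat.
   This is a bijection between partitions and codes (x_1,w_1),...,(x_k,w_k) with
   x_1 > ... > x_k > 0, under which the crank is nonnegative exactly when
   w_1 <= k if x_k > 1, and w_1 < k, 1 < k if x_k = 1.
   A partition l_1 > ... > l_2m into an even number of distinct parts gives the code
   with x_i - x_(i+1) = l_(2i-1) - l_2i (where x_(m+1) = 1) and
   w_i = l_2i - l_(2i+1) - 1; these are exactly the codes with x_k > 1, and the
   decoded partition has size l_1 + l_3 + ... + l_(2m-1).
   Finally, if w_1 > k, write w_1 = q(k+1) + r and trade the surplus q(k+1) for a new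
   last level (1, q-1): this preserves the size, makes the crank nonnegative, and is
   undone by reading q off a last level with x = 1. *)

Lemma geq_trans : transitive geq. Proof. exact: rev_trans leq_trans. Qed.
Lemma gtn_trans : transitive gtn. Proof. exact: rev_trans ltn_trans. Qed.

Lemma seq_pair_ind (T : Type) (P : seq T -> Prop) :
  P [::] -> (forall a, P [:: a]) -> (forall a b r, P r -> P [:: a, b & r]) ->
  forall s, P s.
Proof.
move=> P0 P1 P2 s; have [n] := ubnP (size s).
elim: n s => // n IH [|a [|b r]] //= hs; apply/P2/IH; lia.
Qed.

Lemma map_enum_bij (T U : eqType) (P : pred T) (Q : pred U) (f : T -> U) (g : U -> T)
    (A : seq T) :
  uniq A -> (forall x, (x \in A) = P x) ->
  (forall x, P x -> Q (f x)) -> (forall y, Q y -> P (g y)) ->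
  (forall x, P x -> g (f x) = x) -> (forall y, Q y -> f (g y) = y) ->
  uniq (map f A) /\ forall y, (y \in map f A) = Q y.
Proof.
move=> uA memA fPQ gQP fK gK; split.
  rewrite map_inj_in_uniq // => x y; rewrite !memA => Px Py /(congr1 g).
  by rewrite !fK.
move=> y; apply/mapP/idP => [[x] | Qy]; first by rewrite memA => /fPQ Qfx ->.
by exists (g y); rewrite ?memA ?gK ?gQP.
Qed.

Fixpoint strict_seqs (m : nat) : seq (seq nat) :=
  if m is m'.+1 then strict_seqs m' ++ map (cons m) (strict_seqs m') else [:: [::]].

Lemma strict_seqs_complete m s :
  sorted gtn s -> all (fun x => 0 < x <= m) s -> s \in strict_seqs m.
Proof.
elim: m s => [|m IH] [|x t] //=; first by move=> _ /andP[]; lia.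
  by rewrite mem_cat IH.
rewrite mem_cat => sxt /andP[xm tm].
move: (sxt); rewrite (path_sortedE gtn_trans) => /andP[tx st].
have tm' : all (fun y => 0 < y <= m) t.
  by apply/allP => y yt; move: (allP tx y yt) (allP tm y yt) xm => /=; lia.
case: (ltnP x m.+1) => hx; first by rewrite IH //= tm'; lia.
by apply/orP; right; apply/mapP; exists t; rewrite ?IH //; congr cons; lia.
Qed.

Lemma in_De_singleton a : in_De [:: a] = false.
Proof. by rewrite /in_De andbF. Qed.

Lemma in_De_cons2 a b r :
  in_De [:: a, b & r] = [&& head 0 r < b, b < a & in_De r].
Proof.
rewrite /in_De /is_distinct_partition /= negbK.
case: r => [|c r] /=; first by case: b => [|b]; rewrite ?andbF ?andbT //; lia.
case: (ltnP c b) => cb; rewrite ?andbF //; case: (ltnP b a) => ba; rewrite ?andbF //=.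
have [-> ->] : 0 < a /\ 0 < b by lia.
by rewrite negbK.
Qed.

Lemma odd_indexed_sum_cons2 a b r :
  odd_indexed_sum [:: a, b & r] = a + odd_indexed_sum r.
Proof.
rewrite /odd_indexed_sum big_mkcond [in RHS]big_mkcond /= !big_ord_recl /=.
by under eq_bigr do rewrite add0n negbK.
Qed.

Lemma in_De_strict_seqs s : in_De s -> s \in strict_seqs (odd_indexed_sum s).
Proof.
case: s => [|a [|b r]]; rewrite ?in_De_singleton //; first by rewrite /odd_indexed_sum big_ord0.
rewrite odd_indexed_sum_cons2 => /andP[/andP[pos st] _]; apply: strict_seqs_complete => //.
move: st; rewrite /sorted (path_sortedE gtn_trans) => /andP[/allP lt _].
apply/allP => x xs; have /= x0 := allP pos x xs.
by move: xs x0; rewrite inE => /orP[/eqP->|/lt /=]; lia.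
Qed.

(** * Codes of partitions *)

Definition code := seq (nat * nat).

Fixpoint decode (l : code) : seq nat :=
  if l is (x, w) :: r then x :: map succn (decode r) ++ nseq w 1 else [::].

Fixpoint is_code (l : code) : bool :=
  if l is (x, _) :: r then (head 0 (unzip1 r) < x) && is_code r else true.

Lemma size_decode_cons x w r :
  size (decode ((x, w) :: r)) = (size (decode r) + w).+1.
Proof. by rewrite /= size_cat size_map size_nseq. Qed.

Lemma sumn_decode_cons x w r :
  sumn (decode ((x, w) :: r)) = x + sumn (decode r) + size (decode r) + w.
Proof.
rewrite /= sumn_cat sumn_nseq mul1n.
suff -> : forall s, sumn (map succn s) = sumn s + size s by lia.
by elim=> //= y s ->; lia.
Qed.

Lemma head_decode l : head 0 (decode l) = head 0 (unzip1 l).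
Proof. by case: l => [|[]]. Qed.

Lemma decode_pos l : is_code l -> all (fun y => 0 < y) (decode l).
Proof.
elim: l => [|[x w] r IH] //= /andP[hx /IH hr]; rewrite all_cat all_map all_nseq orbT.
by rewrite andbT; apply/andP; split; [lia | apply/allP].
Qed.

Lemma sorted_decode l : is_code l -> sorted geq (decode l).
Proof.
have path_ones y k : 0 < y -> path geq y (nseq k 1).
  by elim: k y => //= k IHk y ->; rewrite IHk.
elim: l => [|[x w] r IH] //= /andP[hx cr]; rewrite cat_path path_ones ?andbT.
  rewrite -(prednK (leq_ltn_trans (leq0n _) hx)) path_map.
  move: hx (IH cr); rewrite -head_decode.
  by case: (decode r) => //= y s hy ->; rewrite andbT -ltnS prednK //; lia.
by case/lastP: (decode r) => [|s y]; rewrite /= ?map_rcons ?last_rcons //; lia.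
Qed.

Lemma is_partition_decode l : is_code l -> is_partition (decode l).
Proof. by move=> cl; rewrite /is_partition decode_pos ?sorted_decode. Qed.

Fixpoint encode_rec (fuel : nat) (p : seq nat) : code :=
  if (fuel, p) is (f.+1, x :: t) then
    (x, count_mem 1 t) :: encode_rec f [seq y.-1 | y <- t & 1 < y]
  else [::].

Definition encode (p : seq nat) : code := encode_rec (size p) p.

Lemma count_ones_decode_tail w r :
  is_code r -> count_mem 1 (map succn (decode r) ++ nseq w 1) = w.
Proof.
move=> /decode_pos pos; rewrite count_cat count_nseq /= mul1n count_map.
by rewrite (@eq_in_count _ _ pred0) ?count_pred0 // => y /(allP pos) /=; lia.
Qed.

Lemma decode_recK f l : is_code l -> size (decode l) <= f -> encode_rec f (decode l) = l.
Proof.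
elim: f l => [|f IH] [|[x w] r] //= /andP[_ cr]; rewrite size_cat size_map size_nseq => hs.
rewrite count_ones_decode_tail // filter_cat filter_nseq /= cats0 (all_filterP _).
  by rewrite (mapK succnK) IH //; lia.
by rewrite all_map; apply/allP => y /(allP (decode_pos cr)).
Qed.

Lemma decodeK l : is_code l -> encode (decode l) = l.
Proof. by move=> cl; apply: decode_recK. Qed.

Lemma partition_split_ones t :
  is_partition t -> [seq y <- t | 1 < y] ++ nseq (count_mem 1 t) 1 = t.
Proof.
elim: t => //= y t IH /andP[/andP[y0 pt] st].
have tp : is_partition t by apply/andP; split => //; exact: path_sorted st.
case: (ltnP 1 y) => y1.
  by rewrite (negbTE (_ : y != 1)) /= ?IH //; lia.
have t1 : t = nseq (size t) 1.
  apply/all_pred1P/allP => z zt; move: (allP pt z zt).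
  move: st; rewrite /= (path_sortedE geq_trans) => /andP[/allP/(_ z zt)] /=; lia.
have -> : y = 1 by move: y0 => /= y0; lia.
by rewrite {1 2 3}t1 filter_nseq count_nseq /= mul1n.
Qed.

Lemma is_partition_peel x t :
  is_partition (x :: t) ->
  [/\ is_partition [seq y.-1 | y <- t & 1 < y], head 0 [seq y.-1 | y <- t & 1 < y] < x
    & map succn [seq y.-1 | y <- t & 1 < y] ++ nseq (count_mem 1 t) 1 = t].
Proof.
move=> /andP[/andP[/= x0 pt]]; rewrite /= (path_sortedE geq_trans) => /andP[tx st].
have big y : y \in [seq y <- t | 1 < y] -> 1 < y by rewrite mem_filter => /andP[].
split.
- rewrite /is_partition all_map; apply/andP; split; first by apply/allP => y /big /=; lia.
  by apply: (homo_sorted (e := geq)) (sorted_filter geq_trans _ st) => a b /=; lia.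
- suff : all (fun z => z < x) [seq y.-1 | y <- t & 1 < y].
    by case: [seq _ | _ <- _ & _] => [|z r] //= /andP[].
  rewrite all_map; apply/allP => y; rewrite mem_filter => /andP[y1 /(allP tx)] /=; lia.
rewrite -map_comp map_id_in ?partition_split_ones //; last by move=> y /big /=; lia.
by apply/andP; split.
Qed.

Lemma encode_recK f p :
  is_partition p -> size p <= f -> is_code (encode_rec f p) /\ decode (encode_rec f p) = p.
Proof.
elim: f p => [|f IH] [|x t] //= pp hs.
have [rp hr split] := is_partition_peel pp.
have [|cr dr] := IH _ rp; first by rewrite size_map size_filter (leq_trans (count_size _ _)).
by rewrite -head_decode dr hr cr split.
Qed.

Lemma is_code_encode p : is_partition p -> is_code (encode p).
Proof. by move=> pp; have [] := encode_recK pp (leqnn _). Qed.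

Lemma encodeK p : is_partition p -> decode (encode p) = p.
Proof. by move=> pp; have [] := encode_recK pp (leqnn _). Qed.

(** * The crank of a decoded partition *)

(* The default 2 makes the empty code count as one with x_k > 1. *)
Definition last_part (l : code) : nat := last 2 (unzip1 l).

Definition first_ones (l : code) : nat := (head (0, 0) l).2.

Lemma last_part_pos l : is_code l -> 0 < last_part l.
Proof.
by elim: l => [|[x w] [|[y z] r] IH] //= /andP[hx cr]; last exact: IH cr.
Qed.

Lemma size_add_last_part l :
  is_code l -> l != [::] -> size l + last_part l <= (head 0 (unzip1 l)).+1.
Proof.
elim: l => [|[x w] [|[y z] r] IH] //= /andP[hx cr] _.
by have := IH cr isT; rewrite /last_part /=; lia.
Qed.

Lemma count_gt_decode_cons k x w r : 0 < k ->
  count (fun y => k < y) (decode ((x, w) :: r)) = (k < x) + count (fun y => k.-1 < y) (decode r).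
Proof.
move=> k0; rewrite /= count_cat count_map count_nseq /= (_ : k < 1 = false) ?mul0n ?addn0; last lia.
by congr (_ + _); apply: eq_count => y /=; lia.
Qed.

Lemma leq_count_gt_decode l k : is_code l -> 0 < k ->
  (k <= count (fun y => k < y) (decode l)) = (k < size l) || (k == size l) && (1 < last_part l).
Proof.
elim: l k => [|[x w] r IH] [|k] // /andP[hx cr] _; rewrite count_gt_decode_cons //=.
case: k => [|k].
  rewrite (@eq_in_count _ _ predT) ?count_predT; last exact/allP/decode_pos.
  case: r {IH} hx cr => [|[y z] r] /= hx cr; rewrite /last_part /=; first by case: (1 < x).
  by rewrite addnS.
have -> : (k.+2 == (size r).+1) && (1 < last_part ((x, w) :: r)) =
          (k.+1 == size r) && (1 < last_part r) by case: r {IH hx cr}.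
rewrite ltnS -IH //.
case: (leqP k.+1 (count (fun y => k.+1 < y) (decode r))) => h; last by case: (k.+2 < x); lia.
have r_big : (k.+1 < size r) || (k.+1 == size r) && (1 < last_part r) by rewrite -IH.
have r_ne : r != [::] by case: (r) r_big.
have r_size := size_add_last_part cr r_ne; have r_last := last_part_pos cr.
suff -> : k.+2 < x by lia.
by case/orP: r_big => [|/andP[/eqP]]; lia.
Qed.

Lemma count_ones_decode_cons x w r :
  is_code r -> count_mem 1 (decode ((x, w) :: r)) = (x == 1) + w.
Proof. by move=> cr; rewrite /= count_ones_decode_tail. Qed.

Definition crank_code_ok (l : code) : bool :=
  if 1 < last_part l then first_ones l <= size l
  else (1 < size l) && (first_ones l < size l).

Lemma crank_decode_ge0 l : is_code l -> (0 <= crank (decode l))%R = crank_code_ok l.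
Proof.
case: l => [|[x w] r] // /[dup] cl /andP[hx cr].
rewrite /crank count_ones_decode_cons //.
case: eqP => [ones0 | ones_pos].
  have [-> x2] : w = 0 /\ 1 < x by move: hx ones0; case: (x == 1) / eqP; lia.
  rewrite /crank_code_ok /first_ones /=.
  by case: r {cl} hx cr => [|[y z] r] hx cr; rewrite /last_part /= ?x2 //; case: ifP.
rewrite subr_ge0 lez_nat leq_count_gt_decode //; last by lia.
rewrite /crank_code_ok /first_ones /=.
case: r {cl} hx cr => [|[y z] r] hx cr; last move: cr => /andP[hy _];
  rewrite /last_part /= in hx *; case: ifP => hl; case: (x =P 1) => hx1 /=; lia.
Qed.

(** * Codes of partitions in D_e *)

Definition is_De_code (l : code) : bool := is_code l && (1 < last_part l).

Lemma is_De_code_cons x w r :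
  is_De_code ((x, w) :: r) = (head 1 (unzip1 r) < x) && is_De_code r.
Proof.
rewrite /is_De_code /last_part; case: r => [|[y z] r] /=; last by rewrite !andbA.
by rewrite !andbT; case: x => [|[|x]].
Qed.

Fixpoint code_of_De (s : seq nat) : code :=
  if s is a :: b :: r then
    let c := code_of_De r in (a - b + head 1 (unzip1 c), b - head 0 r - 1) :: c
  else [::].

Lemma code_of_De_cons2 a b r :
  code_of_De [:: a, b & r] =
  (a - b + head 1 (unzip1 (code_of_De r)), b - head 0 r - 1) :: code_of_De r.
Proof. by []. Qed.

Fixpoint De_of_code (l : code) : seq nat :=
  if l is (x, w) :: l' then
    let r := De_of_code l' in
    let b := head 0 r + w + 1 in
    [:: b + (x - head 1 (unzip1 l')), b & r]
  else [::].

Lemma size_decode_code_of_De s : in_De s ->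
  size (decode (code_of_De s)) + head 1 (unzip1 (code_of_De s)) = (head 0 s).+1.
Proof.
elim/seq_pair_ind: s => [|a|a b r IH]; rewrite ?in_De_singleton ?in_De_cons2 //.
case/and3P=> rb ba /IH; rewrite /= size_cat size_map size_nseq; lia.
Qed.

Lemma is_De_code_of_De s : in_De s -> is_De_code (code_of_De s).
Proof.
elim/seq_pair_ind: s => [|a|a b r IH]; rewrite ?in_De_singleton ?in_De_cons2 //.
by case/and3P=> rb ba /IH Dr; rewrite /= is_De_code_cons Dr andbT; lia.
Qed.

Lemma code_of_DeK s : in_De s -> De_of_code (code_of_De s) = s.
Proof.
elim/seq_pair_ind: s => [|a|a b r IH]; rewrite ?in_De_singleton ?in_De_cons2 //.
by case/and3P=> rb ba /IH /= ->; congr [:: _, _ & _]; lia.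
Qed.

Lemma sumn_decode_code_of_De s : in_De s -> sumn (decode (code_of_De s)) = odd_indexed_sum s.
Proof.
elim/seq_pair_ind: s => [|a|a b r IH]; rewrite ?in_De_singleton ?in_De_cons2 //.
  by rewrite /odd_indexed_sum big_ord0.
case/and3P=> rb ba Dr; have := size_decode_code_of_De Dr.
by rewrite code_of_De_cons2 sumn_decode_cons IH // odd_indexed_sum_cons2; lia.
Qed.

Lemma De_of_code_ok l : is_De_code l -> in_De (De_of_code l) && (code_of_De (De_of_code l) == l).
Proof.
elim: l => [|[x w] l IH] //; rewrite is_De_code_cons => /andP[lx /IH /andP[Dr /eqP rK]].
rewrite /= in_De_cons2 Dr rK andbT; apply/andP; split; first lia.
by apply/eqP; congr ((_, _) :: _); lia.
Qed.

(** * Spilling the leading ones *)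

Lemma is_code_rcons1 m z : is_code (rcons m (1, z)) = is_De_code m.
Proof.
elim: m => [|[x w] m IH] //; rewrite is_De_code_cons -IH /=.
by case: m {IH} => [|[]].
Qed.

Lemma size_decode_rcons1 m z : size (decode (rcons m (1, z))) = size (decode m) + z.+1.
Proof. by elim: m => [|[x w] m IH]; rewrite ?rcons_cons !size_decode_cons ?IH //; lia. Qed.

Lemma sumn_decode_rcons1 m z :
  sumn (decode (rcons m (1, z))) = sumn (decode m) + (size m).+1 * z.+1.
Proof.
elim: m => [|[x w] m IH]; first by rewrite /= sumn_nseq; lia.
by rewrite rcons_cons !sumn_decode_cons IH size_decode_rcons1 /=; nia.
Qed.

Lemma last_part_rcons m y z : last_part (rcons m (y, z)) = y.
Proof. by rewrite /last_part /unzip1 map_rcons last_rcons. Qed.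

Definition set_first_ones (l : code) (v : nat) : code :=
  if l is (x, _) :: r then (x, v) :: r else [::].

Lemma set_first_onesK l : set_first_ones l (first_ones l) = l.
Proof. by case: l => [|[]]. Qed.

Lemma set_first_ones2 l a b : set_first_ones (set_first_ones l a) b = set_first_ones l b.
Proof. by case: l => [|[]]. Qed.

Lemma size_set_first_ones l v : size (set_first_ones l v) = size l.
Proof. by case: l => [|[]]. Qed.

Lemma is_De_code_set_first_ones l v : is_De_code (set_first_ones l v) = is_De_code l.
Proof. by case: l => [|[]]. Qed.

Lemma first_ones_set l v : l != [::] -> first_ones (set_first_ones l v) = v.
Proof. by case: l => [|[]]. Qed.

Lemma first_ones_rcons l t : l != [::] -> first_ones (rcons l t) = first_ones l.
Proof. by case: l => [|[]]. Qed.

Lemma sumn_decode_set_first_ones l v : l != [::] ->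
  sumn (decode (set_first_ones l v)) + first_ones l = sumn (decode l) + v.
Proof. by case: l => [|[x w] r] // _; rewrite !sumn_decode_cons /first_ones /=; lia. Qed.

Definition spill (l : code) : code :=
  let k := (size l).+1 in
  if first_ones l <= size l then l
  else rcons (set_first_ones l (first_ones l %% k)) (1, (first_ones l %/ k).-1).

Definition unspill (l : code) : code :=
  if 1 < last_part l then l
  else set_first_ones (take (size l).-1 l) (first_ones l + (last (0, 0) l).2.+1 * size l).

Lemma spill_ok l : is_De_code l -> is_code (spill l) && crank_code_ok (spill l).
Proof.
move=> /[dup] De /andP[cl big]; rewrite /spill /crank_code_ok.
case: (leqP (first_ones l) (size l)) => h.
  by rewrite cl big h.
have ne : l != [::] by case: l {De cl big} h.
rewrite is_code_rcons1 is_De_code_set_first_ones De last_part_rcons /=.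
rewrite size_rcons size_set_first_ones first_ones_rcons; last by case: (l) ne => [|[]].
by rewrite first_ones_set // ltn_pmod //; case: (l) ne.
Qed.

Lemma spillK l : is_De_code l -> unspill (spill l) = l.
Proof.
move=> /andP[cl big]; rewrite /spill.
case: (leqP (first_ones l) (size l)) => h; first by rewrite /unspill big.
have ne : l != [::] by case: l {cl big} h.
rewrite /unspill last_part_rcons last_rcons size_rcons /= -cats1 take_size_cat //.
rewrite cats1 first_ones_rcons ?first_ones_set //; last by case: (l) ne => [|[]].
rewrite set_first_ones2 size_set_first_ones prednK ?divn_gt0 //.
by rewrite addnC -divn_eq set_first_onesK.
Qed.

Lemma sumn_decode_spill l : sumn (decode (spill l)) = sumn (decode l).
Proof.
rewrite /spill; case: (leqP (first_ones l) (size l)) => h //.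
have ne : l != [::] by case: l h.
rewrite sumn_decode_rcons1 size_set_first_ones prednK ?divn_gt0 //.
have := sumn_decode_set_first_ones (first_ones l %% (size l).+1) ne.
have := divn_eq (first_ones l) (size l).+1; lia.
Qed.

Lemma unspill_ok l : is_code l -> crank_code_ok l -> is_De_code (unspill l).
Proof.
rewrite /crank_code_ok /unspill; case: ifP => [big cl _ | small].
  by rewrite /is_De_code cl big.
case/lastP: l small => [|m [y z]] // small cl _.
rewrite size_rcons /= -cats1 take_size_cat // is_De_code_set_first_ones.
have y1 : y = 1.
  by move: small (last_part_pos cl); rewrite last_part_rcons; lia.
by rewrite -(is_code_rcons1 m z) -y1.
Qed.

Lemma unspillK l : is_code l -> crank_code_ok l -> spill (unspill l) = l.
Proof.
rewrite /crank_code_ok /unspill; case: ifP => [big _ | small cl /andP[s1 s2]].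
  by rewrite /spill => ->.
case/lastP: l small cl s1 s2 => [|m [y z]] //.
rewrite last_part_rcons size_rcons => small cl s1 s2.
have y1 : y = 1 by move: small (last_part_pos cl); rewrite last_part_rcons; lia.
have ne : m != [::] by case: m {cl s2} s1.
rewrite first_ones_rcons // in s2 *.
rewrite last_rcons /= -cats1 take_size_cat // /spill size_set_first_ones first_ones_set //.
have -> : (first_ones m + z.+1 * (size m).+1 <= size m) = false by apply/negbTE; nia.
rewrite [first_ones m + _]addnC modnMDl divnMDl // modn_small // divn_small // addn0 /=.
by rewrite set_first_ones2 set_first_onesK y1 cats1.
Qed.

Definition crank_of_De (s : seq nat) : seq nat := decode (spill (code_of_De s)).

Definition De_of_crank (p : seq nat) : seq nat := De_of_code (unspill (encode p)).

Lemma crank_of_De_ok s : in_De s ->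
  [&& is_partition (crank_of_De s), sumn (crank_of_De s) == odd_indexed_sum s
    & (0 <= crank (crank_of_De s))%R].
Proof.
move=> Ds; have /andP[cl ok] := spill_ok (is_De_code_of_De Ds).
rewrite is_partition_decode // crank_decode_ge0 // ok.
by rewrite sumn_decode_spill sumn_decode_code_of_De // eqxx.
Qed.

Lemma De_of_crank_ok p : is_partition p -> (0 <= crank p)%R ->
  in_De (De_of_crank p) && (odd_indexed_sum (De_of_crank p) == sumn p).
Proof.
move=> pp; rewrite -{1}(encodeK pp) crank_decode_ge0 ?is_code_encode // => ok.
have De := unspill_ok (is_code_encode pp) ok.
have /andP[Ds /eqP sK] := De_of_code_ok De.
rewrite Ds -sumn_decode_code_of_De // sK -sumn_decode_spill.
by rewrite unspillK ?is_code_encode // encodeK // eqxx.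
Qed.

Lemma crank_of_DeK s : in_De s -> De_of_crank (crank_of_De s) = s.
Proof.
move=> Ds; have /andP[cl _] := spill_ok (is_De_code_of_De Ds).
by rewrite /De_of_crank /crank_of_De decodeK // spillK ?code_of_DeK ?is_De_code_of_De.
Qed.

Lemma De_of_crankK p : is_partition p -> (0 <= crank p)%R -> crank_of_De (De_of_crank p) = p.
Proof.
move=> pp; rewrite -{1}(encodeK pp) crank_decode_ge0 ?is_code_encode // => ok.
have /andP[_ /eqP sK] := De_of_code_ok (unspill_ok (is_code_encode pp) ok).
by rewrite /crank_of_De /De_of_crank sK unspillK ?is_code_encode ?encodeK.
Qed.

Theorem theorem10 (n : nat) :
  exists (A B : seq (seq nat)),
    [/\ uniq A, uniq B,
        (forall s, (s \in A) = in_De s && (odd_indexed_sum s == n)),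
        (forall s, (s \in B) =
                   [&& is_partition s, sumn s == n & (0 <= crank s)%R]) &
        size A = size B].
Proof.
pose P s := in_De s && (odd_indexed_sum s == n).
pose Q p := [&& is_partition p, sumn p == n & (0 <= crank p)%R].
set A := undup [seq s <- strict_seqs n | P s].
have memA s : (s \in A) = P s.
  rewrite mem_undup mem_filter andb_idr // => /andP[Ds /eqP <-].
  exact: in_De_strict_seqs.
have PQ s : P s -> Q (crank_of_De s).
  case/andP=> Ds /eqP On; have /and3P[pc /eqP sc cc] := crank_of_De_ok Ds.
  by rewrite /Q pc sc cc On eqxx.
have QP p : Q p -> P (De_of_crank p).
  case/and3P=> pp /eqP pn cp; have /andP[Ds /eqP Os] := De_of_crank_ok pp cp.
  by rewrite /P Ds Os pn eqxx.
have fK s : P s -> De_of_crank (crank_of_De s) = s by case/andP=> Ds _; exact: crank_of_DeK.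
have gK p : Q p -> crank_of_De (De_of_crank p) = p.
  by case/and3P=> pp _ cp; exact: De_of_crankK.
have [uB memB] := map_enum_bij (undup_uniq _) memA PQ QP fK gK.
by exists A, (map crank_of_De A); rewrite size_map; split => //; exact: undup_uniq.
Qed.
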